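(* Let $F$ be a graph (2-uniform) and let $\epsilon > 0$. Then there exist $n_0$ and $\delta > 0$ (depending only on $\epsilon$ and $F$) such that the following holds. Let $V$ be a vertex set of size $n = |V| > n_0$. If $G = (V,E)$ is a graph with $|E| = \mathrm{ex}^*(n,F) + \epsilon\binom{n}{2}$ edges, then for every set of edges $E_0 \subset V^{(2)} \setminus E$ there exists a subset $X \subset E$ such that the graph $(V, E_0 \cup X)$ contains at least $\delta n^{|F|}$ induced copies of $F$.
   Context: $V^{(2)}$ denotes the set of 2-element subsets of $V$, and $|F|$ is the number of vertices of $F$. For an $n$-vertex set $V$, $\mathrm{ex}^*(n,F)$ is the maximum of $|E|$ over all graphs $G=(V,E)$ for which there exists an edge set $E_0 \subset V^{(2)}$ with $E \cap E_0 = \emptyset$ such that for every $X \subset E$ the graph $(V, E_0 \cup X)$ contains no induced subgraph isomorphic to $F$. *)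

From mathcomp Require Import all_boot all_order all_algebra.
From mathcomp Require Import reals.
Set Implicit Arguments. Unset Strict Implicit. Unset Printing Implicit Defensive.

Definition pairs (T : finType) : {set {set T}} := [set e : {set T} | #|e| == 2].

Definition is_graph (T : finType) (E : {set {set T}}) : bool := E \subset pairs T.

Definition induced_copy (TF V : finType) (EF : {set {set TF}})
  (E : {set {set V}}) (S : {set V}) : bool :=
  [exists f : {ffun TF -> V},
     [&& injectiveb f, f @: setT == S &
      [forall x, forall y, (x != y) ==>
          (([set x; y] \in EF) == ([set f x; f y] \in E))]]].

Definition n_induced (TF V : finType) (EF : {set {set TF}})
  (E : {set {set V}}) : nat :=
  #|[set S : {set V} | induced_copy EF E S]|.

Definition has_induced (TF V : finType) (EF : {set {set TF}})
  (E : {set {set V}}) : bool := 0 < n_induced EF E.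

Definition exstar_good (TF : finType) (EF : {set {set TF}}) (n : nat)
  (E : {set {set 'I_n}}) : bool :=
  is_graph E &&
  [exists E0 : {set {set 'I_n}},
     [&& E0 \subset pairs 'I_n, [disjoint E0 & E] &
      [forall X : {set {set 'I_n}},
          (X \subset E) ==> ~~ has_induced EF (E0 :|: X)]]].

Definition exstar (TF : finType) (EF : {set {set TF}}) (n : nat) : nat :=
  \max_(E : {set {set 'I_n}} | exstar_good EF E) #|E|.

(* Choose m so large that the density ex*(j)/C(j,2) never falls more than eps/2 below its
   value at j = m (this replaces monotonicity of the density). Averaging over injections
   g : [m] -> [n], the pulled-back graph g^*E has mean density |E|/C(n,2), which exceeds
   ex*(m)/C(m,2) by eps/2, so an eps/2 proportion of the injections are overfull:
   |g^*E| > ex*(m). For overfull g, the set g^*E0 does not witness admissibility of g^*E,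
   hence some X' in g^*E gives an induced F, and so does every X obtained from g(X') by
   adding edges of E not spanned by the image of g: at least 2^(|E| - C(m,2)) sets X.
   Averaging over X, one X is good for a 2^-C(m,2) fraction of the overfull injections,
   while an induced copy of F in E0 + X is seen by at most k^k m^k n^(m-k) injections
   (k = |F|). Since there are about n^m injections, E0 + X has eps/2^O(m^2) n^k copies. *)

From mathcomp Require Import all_boot all_order all_algebra fingroup perm.
From mathcomp Require Import reals ring lra zify.
From mathcomp Require classical_sets.
Set Implicit Arguments. Unset Strict Implicit. Unset Printing Implicit Defensive.

Section Counting.
Variables (aT pT : finType).

Lemma double_counting (S : {pred aT}) (P : {pred pT}) (r : aT -> pT -> bool) :
  \sum_(a in S) #|[set p in P | r a p]| = \sum_(p in P) #|[set a in S | r a p]|.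
Proof.
transitivity (\sum_(a in S) \sum_(p in P) (r a p : nat)).
  by apply: eq_bigr => a _; rewrite -sum1_card big_mkcond [RHS]big_mkcond;
     apply: eq_bigr => p _; rewrite !inE; case: (p \in P); case: (r a p).
rewrite exchange_big; apply: eq_bigr => p _.
by rewrite -sum1_card big_mkcond [RHS]big_mkcond /=; apply: eq_bigr => a _;
   rewrite !inE; case: (a \in S); case: (r a p).
Qed.

Lemma card_le_sum_fibres (S : {set aT}) (P : {set pT}) (r : aT -> pT -> bool) :
  (forall a, a \in S -> exists2 p, p \in P & r a p) ->
  #|S| <= \sum_(p in P) #|[set a in S | r a p]|.
Proof.
move=> covered; rewrite -double_counting -sum1_card; apply: leq_sum => a /covered [p pP rap].
by rewrite card_gt0; apply/set0Pn; exists p; rewrite inE pP.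
Qed.

Lemma exists_geq_mean (P : {pred aT}) (F : aT -> nat) : 0 < #|P| ->
  exists2 a, a \in P & \sum_(b in P) F b <= #|P| * F a.
Proof.
move=> /(eq_bigmax_cond F) [a aP maxF]; exists a => //.
rewrite -sum_nat_const -maxF; apply: leq_sum => b bP; exact: leq_bigmax_cond.
Qed.

End Counting.

Notation inj_ffuns aT rT := [set f : {ffun aT -> rT} | injectiveb f].

Lemma card_pairs k : #|pairs 'I_k| = 'C(k, 2).
Proof. by rewrite /pairs card_draws card_ord. Qed.

Lemma pairs_transitive (T : finType) (e e' : {set T}) :
  e \in pairs T -> e' \in pairs T -> exists s : {perm T}, s @: e = e'.
Proof.
rewrite !inE => /cards2P [a [b [ab ->]]] /cards2P [c [d [cd ->]]].
pose b' := tperm a c b.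
have b'c : b' != c.
  by apply: contra ab => /eqP b'_c; rewrite -(perm_inj (etrans b'_c (esym (tpermL a c)))).
exists (tperm a c * tperm b' d)%g.
by rewrite imsetU1 imset_set1 !permM tpermL (tpermD b'c) -/b' ?tpermL // eq_sym.
Qed.

Section Pullback.
Variables m n : nat.
Implicit Types (g : {ffun 'I_m -> 'I_n}) (A B E : {set {set 'I_n}}).

Definition pullback g E : {set {set 'I_m}} := [set e : {set 'I_m} | g @: e \in E].

Lemma pullbackU g A B : pullback g (A :|: B) = pullback g A :|: pullback g B.
Proof. by apply/setP => e; rewrite !inE. Qed.

Lemma pullbackS g A B : A \subset B -> pullback g A \subset pullback g B.
Proof. by move=> /subsetP AB; apply/subsetP => e; rewrite !inE => /AB. Qed.

Lemma pullback_pairs g : injectiveb g -> pullback g (pairs 'I_n) = pairs 'I_m.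
Proof. by move=> /injectiveP g_inj; apply/setP => e; rewrite !inE card_imset. Qed.

Lemma pullback_graph g A : injectiveb g -> is_graph A -> is_graph (pullback g A).
Proof. by move=> g_inj /(pullbackS g); rewrite pullback_pairs. Qed.

Lemma pullback_imset g (X : {set {set 'I_m}}) :
  injectiveb g -> pullback g [set g @: e | e : {set 'I_m} in X] = X.
Proof.
move=> /injectiveP/imset_inj g_inj; apply/setP => e.
by rewrite inE (mem_imset _ _ g_inj).
Qed.

Definition preimage_count (e : {set 'I_n}) : nat :=
  \sum_(g in inj_ffuns 'I_m 'I_n) #|[set e' : {set 'I_m} | g @: e' == e]|.

Lemma sum_card_pullback E :
  \sum_(g in inj_ffuns 'I_m 'I_n) #|pullback g E| = \sum_(e in E) preimage_count e.
Proof.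
rewrite exchange_big /=; apply: eq_bigr => g _.
rewrite -sum1_card (partition_big (F := fun=> 1) (fun e' : {set 'I_m} => g @: e') (mem E)) /=;
  last by move=> e'; rewrite inE.
apply: eq_bigr => e eE; rewrite -sum1_card; apply: eq_bigl => e'.
by rewrite !inE; case: eqP => [->|]; rewrite ?eE ?andbF.
Qed.

Lemma preimage_count_perm (e : {set 'I_n}) (s : {perm 'I_n}) :
  preimage_count (s @: e) = preimage_count e.
Proof.
pose sg (g : {ffun 'I_m -> 'I_n}) := [ffun x => s (g x)].
have sg_inj : injective sg.
  by move=> g1 g2 /ffunP eq_sg; apply/ffunP => x; move: (eq_sg x); rewrite !ffunE; apply: perm_inj.
rewrite /preimage_count (reindex_inj sg_inj); apply: eq_big => [g|g _].
  rewrite !inE; apply/injectiveP/injectiveP => g_inj x y.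
    by move=> gxy; apply: g_inj; rewrite !ffunE gxy.
  by rewrite !ffunE => /perm_inj; apply: g_inj.
apply: eq_card => e'; rewrite !inE.
have -> : sg g @: e' = s @: (g @: e').
  by rewrite -imset_comp; apply: eq_imset => x; rewrite ffunE.
by rewrite (inj_eq (imset_inj (@perm_inj _ s))).
Qed.

Lemma sum_card_pullback_graph E : is_graph E ->
  (\sum_(g in inj_ffuns 'I_m 'I_n) #|pullback g E|) * 'C(n, 2)
    = #|E| * (#|inj_ffuns 'I_m 'I_n| * 'C(m, 2)).
Proof.
move=> E_graph.
have sum_pairs : \sum_(g in inj_ffuns 'I_m 'I_n) #|pullback g (pairs 'I_n)|
                   = #|inj_ffuns 'I_m 'I_n| * 'C(m, 2).
  rewrite -sum_nat_const; apply: eq_bigr => g.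
  by rewrite inE => /pullback_pairs ->; exact: card_pairs.
have [pairs0 | [e0 e0_pair]] := set_0Vmem (pairs 'I_n).
  have -> : E = set0 by apply/eqP; rewrite -subset0 -pairs0.
  by rewrite -sum_pairs pairs0 cards0 !sum_card_pullback !big_set0.
have count_const e : e \in pairs 'I_n -> preimage_count e = preimage_count e0.
  by move=> /(pairs_transitive e0_pair) [s <-]; rewrite preimage_count_perm.
rewrite -sum_pairs !sum_card_pullback.
rewrite (eq_bigr (fun=> preimage_count e0)); last by move=> e /(subsetP E_graph) /count_const.
rewrite [X in _ = _ * X](eq_bigr (fun=> preimage_count e0)) //.
by rewrite !sum_nat_const card_pairs -mulnA (mulnC (preimage_count e0)).
Qed.

End Pullback.

Section Embeddings.
Variables (TF : finType) (EF : {set {set TF}}).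
Local Notation k := #|TF|.

Definition embeddings (V : finType) (H : {set {set V}}) : {set {ffun TF -> V}} :=
  [set f : {ffun TF -> V} | injectiveb f &&
     [forall x, forall y, (x != y) ==> (([set x; y] \in EF) == ([set f x; f y] \in H))]].

Lemma has_induced_embedding (V : finType) (H : {set {set V}}) :
  has_induced EF H -> exists f, f \in embeddings H.
Proof.
rewrite /has_induced /n_induced card_gt0 => /set0Pn [S]; rewrite inE.
by case/existsP => f /and3P [f_inj _ f_ind]; exists f; rewrite inE f_inj.
Qed.

Lemma card_embeddings_le (V : finType) (H : {set {set V}}) :
  #|embeddings H| <= n_induced EF H * k ^ k.
Proof.
rewrite -sum1_card (partition_big (F := fun=> 1) (fun f : {ffun TF -> V} => f @: setT)
  (induced_copy EF H)) /=; last first.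
  by move=> f; rewrite inE => /andP [f_inj f_ind]; apply/existsP; exists f; rewrite f_inj eqxx.
rewrite /n_induced -sum_nat_const [X in _ <= X](eq_bigl (induced_copy EF H)) => [|S];
  last by rewrite inE.
apply: leq_sum => S /existsP [f /and3P [/injectiveP f_inj /eqP f_S _]].
have card_S : #|S| = k by rewrite -f_S card_imset // cardsT.
rewrite sum1_card -{1}card_S -card_ffun_on; apply: subset_leq_card; apply/subsetP => h.
rewrite !inE => /andP [_ /eqP <-]; apply/ffun_onP => x.
by apply: imset_f; rewrite inE.
Qed.

Lemma comp_embedding_pullback m n (g : {ffun 'I_m -> 'I_n}) (H : {set {set 'I_n}}) f :
  injectiveb g -> f \in embeddings (pullback g H) -> [ffun t => g (f t)] \in embeddings H.
Proof.
move=> /injectiveP g_inj; rewrite !inE => /andP [/injectiveP f_inj /forallP f_ind].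
apply/andP; split; first by apply/injectiveP => x y; rewrite !ffunE => /g_inj /f_inj.
apply/forallP => x; apply/forallP => y; apply/implyP => xy.
by have := forallP (f_ind x) y; rewrite xy /= !ffunE inE imsetU1 imset_set1.
Qed.

Lemma card_ffun_extensions_le m n (f : {ffun TF -> 'I_m}) (h : {ffun TF -> 'I_n}) :
  injectiveb f -> #|[set g : {ffun 'I_m -> 'I_n} | [ffun t => g (f t)] == h]| <= n ^ (m - k).
Proof.
move=> /injectiveP f_inj.
pose allowed (i : 'I_m) := [set y : 'I_n | [forall t, (f t == i) ==> (y == h t)]].
apply: (@leq_trans #|family allowed|).
  apply: subset_leq_card; apply/subsetP => g; rewrite inE => /eqP gf_h.
  apply/familyP => i; rewrite inE; apply/forallP => t; apply/implyP => /eqP <-.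
  by rewrite -gf_h ffunE.
rewrite card_family foldrE big_map big_enum /=.
rewrite (bigID (fun i => i \in codom f)) /= -[n ^ _]mul1n; apply: leq_mul.
  apply: (@leq_trans (\prod_(i in 'I_m | i \in codom f) 1)); last by rewrite big1_eq.
  apply: leq_prod => _ /codomP [t ->]; rewrite -(cards1 (h t)).
  apply: subset_leq_card; apply/subsetP => y.
  by rewrite !inE => /forallP /(_ t); rewrite eqxx.
apply: leq_trans (leq_prod (fun i _ => max_card (allowed i))) _.
rewrite prod_nat_const card_ord; apply: eq_leq; congr (_ ^ _).
rewrite -[in RHS](card_ord m) -(cardC (mem (codom f))) card_codom // addKn.
by apply: eq_card => i; rewrite !inE.
Qed.

Lemma card_induced_pullbacks_le m n (H : {set {set 'I_n}}) :
  #|[set g in inj_ffuns 'I_m 'I_n | has_induced EF (pullback g H)]|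
    <= n_induced EF H * k ^ k * m ^ k * n ^ (m - k).
Proof.
set S := [set g in _ | _].
pose P := setX (inj_ffuns TF 'I_m) (embeddings H).
apply: (@leq_trans (\sum_(p in P) #|[set g in S | [ffun t => g (p.1 t)] == p.2]|)).
  apply: card_le_sum_fibres => g; rewrite !inE => /andP [g_inj /has_induced_embedding [f f_emb]].
  exists (f, [ffun t => g (f t)]); last exact: eqxx.
  rewrite in_setX /= (comp_embedding_pullback g_inj f_emb) andbT inE.
  by move: f_emb; rewrite inE => /andP [].
apply: (@leq_trans (\sum_(p in P) n ^ (m - k))).
  apply: leq_sum => -[f h]; rewrite !inE /= => /andP [f_inj _].
  apply: leq_trans (card_ffun_extensions_le h f_inj).
  by apply: subset_leq_card; apply/subsetP => g; rewrite !inE => /andP [].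
rewrite sum_nat_const cardsX leq_mul2r mulnC leq_mul ?orbT ?card_embeddings_le //.
by apply: leq_trans (max_card _) _; rewrite card_ffun !card_ord.
Qed.

End Embeddings.

Section Overfull.
Variables (TF : finType) (EF : {set {set TF}}) (m n : nat).
Implicit Types (g : {ffun 'I_m -> 'I_n}) (E : {set {set 'I_n}}).

Definition overfull E :=
  inj_ffuns 'I_m 'I_n :&: [set g | exstar EF m < #|pullback g E|].

Lemma sum_card_pullback_le E : is_graph E ->
  \sum_(g in inj_ffuns 'I_m 'I_n) #|pullback g E|
    <= #|overfull E| * 'C(m, 2) + #|inj_ffuns 'I_m 'I_n| * exstar EF m.
Proof.
move=> E_graph; rewrite (big_setID [set g | exstar EF m < #|pullback g E|]) /=.
apply: leq_add.
  rewrite -sum_nat_const; apply: leq_sum => g; rewrite !inE => /andP [g_inj _].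
  by rewrite -card_pairs; apply/subset_leq_card/pullback_graph.
apply: (@leq_trans (\sum_(g in inj_ffuns 'I_m 'I_n :\: [set g | exstar EF m < #|pullback g E|])
                      exstar EF m)).
  by apply: leq_sum => g; rewrite !inE -leqNgt => /andP [].
by rewrite sum_nat_const leq_mul2r subset_leq_card ?orbT // subsetDl.
Qed.

Lemma overfull_pullback_induced E E0 g : is_graph E -> E0 \subset pairs 'I_n :\: E ->
  g \in overfull E ->
  exists2 X' : {set {set 'I_m}}, X' \subset pullback g E & has_induced EF (pullback g E0 :|: X').
Proof.
move=> E_graph E0_sub; rewrite !inE => /andP [g_inj overfull_g].
have not_good : ~~ exstar_good EF (pullback g E).
  by apply: contraL overfull_g => good; rewrite -leqNgt; exact: leq_bigmax_cond.
have E0_graph : is_graph E0 by apply: subset_trans E0_sub (subsetDl _ _).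
have disjoint_E0 : [disjoint pullback g E0 & pullback g E].
  rewrite -setI_eq0; apply/eqP/setP => e; rewrite !inE.
  by apply/negP => /andP [/(subsetP E0_sub)]; rewrite inE => /andP [/negP].
move: not_good; rewrite /exstar_good pullback_graph //= negb_exists.
move=> /forallP /(_ (pullback g E0)).
rewrite (pullback_graph g_inj E0_graph : _ \subset _) disjoint_E0.
by rewrite negb_forall => /existsP [X]; rewrite negb_imply negbK => /andP []; exists X.
Qed.

Lemma card_induced_supersets E E0 g (X' : {set {set 'I_m}}) :
  is_graph E -> injectiveb g -> X' \subset pullback g E ->
  has_induced EF (pullback g E0 :|: X') ->
  2 ^ #|E| <= #|[set X in powerset E | has_induced EF (pullback g (E0 :|: X))]| * 2 ^ 'C(m, 2).
Proof.
move=> E_graph g_inj X'_sub X'_ind.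
pose seen := [set g @: e | e : {set 'I_m} in pairs 'I_m].
pose Z := [set g @: e | e : {set 'I_m} in X'].
have Z_seen : Z \subset seen.
  by apply/imsetS/(subset_trans X'_sub)/pullback_graph.
have Z_E : Z \subset E.
  by apply/subsetP => _ /imsetP [e /(subsetP X'_sub) + ->]; rewrite inE.
(* Edges of E outside [seen] do not change the pullback, so they can be added
   freely to the image of X'. *)
have pullback_unseen (Y : {set {set 'I_n}}) : Y \subset E :\: seen -> pullback g Y = set0.
  move=> Y_sub; apply/setP => e; rewrite !inE; apply/negP => /(subsetP Y_sub).
  rewrite inE => /andP [/negP unseen /(subsetP E_graph) ge_pair]; apply: unseen.
  by apply: imset_f; rewrite -(pullback_pairs g_inj) inE.
have remove_seen (Y : {set {set 'I_n}}) : Y \subset E :\: seen -> (Y :|: Z) :\: seen = Y.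
  move=> Y_sub; apply/setP => x; rewrite !inE; case: (boolP (x \in seen)) => x_seen /=.
    by apply/esym/negP => /(subsetP Y_sub); rewrite inE x_seen.
  by rewrite (contraNF (subsetP Z_seen x)) ?orbF.
rewrite -(cardsID seen E) expnD mulnC leq_mul //; last first.
  by rewrite leq_pexp2l // -card_pairs (leq_trans (subset_leq_card (subsetIr _ _))) ?leq_imset_card.
rewrite -card_powerset -(card_in_imset (f := fun Y => Y :|: Z)); last first.
  move=> Y1 Y2; rewrite !inE => Y1_sub Y2_sub eqYZ.
  by rewrite -(remove_seen Y1) // eqYZ remove_seen.
apply/subset_leq_card/subsetP => _ /imsetP [Y + ->]; rewrite inE => Y_sub.
rewrite !inE subUset Z_E (subset_trans Y_sub (subsetDl _ _)) /=.
by rewrite !pullbackU pullback_imset // (pullback_unseen Y Y_sub) set0U.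
Qed.

Lemma exists_subset_induced_often E E0 : is_graph E -> E0 \subset pairs 'I_n :\: E ->
  exists2 X : {set {set 'I_n}}, X \subset E &
    #|overfull E| <= #|[set g in inj_ffuns 'I_m 'I_n | has_induced EF (pullback g (E0 :|: X))]|
                       * 2 ^ 'C(m, 2).
Proof.
move=> E_graph E0_sub.
pose induces g X := has_induced EF (pullback g (E0 :|: X)).
have powerset_gt0 : 0 < #|powerset E| by rewrite card_powerset expn_gt0.
have [X X_sub mean_le] :=
  exists_geq_mean (fun X => #|[set g in overfull E | induces g X]|) powerset_gt0.
exists X; first by rewrite -powersetE.
have total : #|overfull E| * 2 ^ #|E| <=
    (\sum_(X in powerset E) #|[set g in overfull E | induces g X]|) * 2 ^ 'C(m, 2).
  rewrite -double_counting -sum_nat_const big_distrl /=; apply: leq_sum => g g_over.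
  have [X' X'_sub X'_ind] := overfull_pullback_induced E_graph E0_sub g_over.
  move: g_over; rewrite !inE => /andP [g_inj _].
  exact: card_induced_supersets X'_sub X'_ind.
move: (leq_trans total (leq_mul mean_le (leqnn _))).
rewrite card_powerset mulnC -mulnA leq_pmul2l ?expn_gt0 // => /leq_trans; apply.
rewrite leq_mul2r subset_leq_card ?orbT //.
by apply/subsetP => g; rewrite !inE => /andP [/andP [-> _]].
Qed.

Lemma card_overfull_le E E0 : is_graph E -> E0 \subset pairs 'I_n :\: E ->
  exists2 X : {set {set 'I_n}}, X \subset E &
    #|overfull E| <= n_induced EF (E0 :|: X) * (#|TF| ^ #|TF| * m ^ #|TF| * 2 ^ 'C(m, 2))
                     * n ^ (m - #|TF|).
Proof.
move=> E_graph E0_sub; have [X X_sub often] := exists_subset_induced_often E_graph E0_sub.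
exists X => //; apply: leq_trans often _.
apply: leq_trans (leq_mul (card_induced_pullbacks_le EF m (E0 :|: X)) (leqnn _)) _.
by rewrite !mulnA [X in _ <= X]mulnAC.
Qed.

End Overfull.

Lemma leq_expn_ffact n m : 2 * m <= n -> n ^ m <= 2 ^ m * n ^_ m.
Proof.
elim: m => [|m IHm] le_2m_n; first by rewrite ffactn0.
have IH : n ^ m <= 2 ^ m * n ^_ m by apply: IHm; lia.
have le_n : n <= 2 * (n - m) by lia.
rewrite ffactnSr !expnS; apply: leq_trans (leq_mul le_n IH) _.
by rewrite mulnACA [(n - m) * _]mulnC.
Qed.

Import Order.TTheory GRing.Theory Num.Theory.
Local Open Scope ring_scope.

Lemma card_overfull_ge (R : realFieldType) (TF : finType) (EF : {set {set TF}}) (m n : nat)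
    (E : {set {set 'I_n}}) (d : R) :
  (1 < m)%N -> (m <= n)%N -> is_graph E ->
  (exstar EF m)%:R / 'C(m, 2)%:R + d <= #|E|%:R / 'C(n, 2)%:R ->
  d * #|inj_ffuns 'I_m 'I_n|%:R <= #|overfull EF m E|%:R.
Proof.
move=> m_gt1 m_le_n E_graph density_gap.
have cm_gt0 : 0 < 'C(m, 2)%:R :> R by rewrite ltr0n bin_gt0.
have cn_gt0 : 0 < 'C(n, 2)%:R :> R by rewrite ltr0n bin_gt0 (leq_trans m_gt1).
have := leq_trans (eq_leq (esym (sum_card_pullback_graph m E_graph)))
                  (leq_mul (sum_card_pullback_le EF m E_graph) (leqnn 'C(n, 2))).
rewrite -(ler_nat R) !(natrM, natrD).
move: density_gap; set x := (exstar EF m)%:R; set e := #|E|%:R; set i := #|_|%:R.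
set b := #|overfull _ _ _|%:R; set cm := 'C(m, 2)%:R; set cn := 'C(n, 2)%:R.
move=> density_gap counted.
have excess_le : (e / cn - x / cm) * i <= b.
  rewrite -(ler_pM2r (mulr_gt0 cm_gt0 cn_gt0)).
  have -> : (e / cn - x / cm) * i * (cm * cn) = e * (i * cm) - i * x * cn.
    by field; rewrite !gt_eqF.
  lra.
apply: le_trans excess_le; rewrite ler_wpM2r ?ler0n //; lra.
Qed.

Lemma exists_almost_min_tail (R : realType) (u : nat -> R) (b eps : R) (M0 : nat) :
  0 < eps -> (forall j, b <= u j) ->
  exists2 m, (M0 <= m)%N & forall n, (m <= n)%N -> u m - eps <= u n.
Proof.
move=> eps_gt0 u_ge_b.
pose tail (x : R) := exists2 j, (M0 <= j)%N & u j = x.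
have tail_lb : classical_sets.has_lbound tail by exists b => _ [j _ <-].
have tail_inf : classical_sets.has_inf tail by split => //; exists (u M0), M0.
have [_ [m M0_le_m <-] um_lt] := inf_adherent eps_gt0 tail_inf.
exists m => // n m_le_n.
have : inf tail <= u n by apply: (ge_inf tail_lb); exists n => //; exact: leq_trans m_le_n.
lra.
Qed.

Lemma exists_subset_many_induced (R : realFieldType) (TF : finType) (EF : {set {set TF}})
    (m n : nat) (E E0 : {set {set 'I_n}}) (d : R) :
  (1 < m)%N -> (#|TF| <= m)%N -> (2 * m <= n)%N -> is_graph E -> E0 \subset pairs 'I_n :\: E ->
  0 <= d -> (exstar EF m)%:R / 'C(m, 2)%:R + d <= #|E|%:R / 'C(n, 2)%:R ->
  exists2 X : {set {set 'I_n}}, X \subset E &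
    d * n%:R ^+ #|TF|
      <= (2 ^ m * (#|TF| ^ #|TF| * m ^ #|TF| * 2 ^ 'C(m, 2)))%:R * (n_induced EF (E0 :|: X))%:R.
Proof.
set k := #|TF|; set c := (k ^ k * _ * _)%N.
move=> m_gt1 k_le_m le_2m_n E_graph E0_sub d_ge0 gap.
have m_le_n : (m <= n)%N by lia.
have [X X_sub overfull_le] := card_overfull_le EF m E_graph E0_sub.
exists X => //; rewrite -/k -/c in overfull_le; clearbody c.
have overfull_ge := card_overfull_ge m_gt1 m_le_n E_graph gap.
have inj_ge : n%:R ^+ k * n%:R ^+ (m - k) <= (2 ^ m)%:R * #|inj_ffuns 'I_m 'I_n|%:R :> R.
  by rewrite -exprD subnKC // -natrX -natrM ler_nat card_inj_ffuns !card_ord leq_expn_ffact.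
move: overfull_le; rewrite -(ler_nat R) !natrM natrX.
move: overfull_ge inj_ge; set I := #|_|%:R; set B := #|_|%:R; set N := (n_induced _ _)%:R.
set p := (2 ^ m)%:R; set a := n%:R ^+ (m - k) => overfull_ge inj_ge overfull_le.
have a_gt0 : 0 < a by rewrite exprn_gt0 // ltr0n; lia.
have p_ge0 : 0 <= p by rewrite ler0n.
rewrite -(ler_pM2r a_gt0).
have le1 : d * (n%:R ^+ k * a) <= d * (p * I) by rewrite ler_wpM2l.
have le2 : p * (d * I) <= p * B by rewrite ler_wpM2l.
have le3 : p * B <= p * (N * c%:R * a) by rewrite ler_wpM2l.
lra.
Qed.

Theorem corollary3 (R : realType) (TF : finType) (EF : {set {set TF}})
  (HF : is_graph EF) (eps : R) (heps : 0 < eps) :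
  exists (n0 : nat) (delta : R), 0 < delta /\
    forall (n : nat) (E : {set {set 'I_n}}),
      (n0 < n)%N -> is_graph E ->
      (#|E|%:R : R) = (exstar EF n)%:R + eps * ('C(n, 2))%:R ->
      forall E0 : {set {set 'I_n}},
        E0 \subset pairs 'I_n :\: E ->
        exists X : {set {set 'I_n}},
          X \subset E /\
          delta * (n%:R ^+ #|TF|) <= (n_induced EF (E0 :|: X))%:R.
Proof.
set k := #|TF|.
pose density j := (exstar EF j)%:R / 'C(j, 2)%:R : R.
have [m m_large density_tail] := @exists_almost_min_tail R density 0 (eps / 2) (maxn 2 k)
  ltac:(lra) (fun j => divr_ge0 (ler0n _ _) (ler0n _ _)).
move: m_large; rewrite geq_max => /andP [m_gt1 k_le_m].
pose c := (2 ^ m * (k ^ k * m ^ k * 2 ^ 'C(m, 2)))%N.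
have c_gt0 : 0 < c%:R :> R.
  by rewrite ltr0n !muln_gt0 !expn_gt0 (leq_trans _ m_gt1) //; case: (k) => //=; rewrite orbT.
exists (2 * m)%N, (eps / 2 / c%:R).
split=> [|n E n_gt E_graph card_E E0 E0_sub]; first by rewrite divr_gt0 //; lra.
have m_le_n : (m <= n)%N by lia.
have gap : density m + eps / 2 <= #|E|%:R / 'C(n, 2)%:R.
  have := density_tail n m_le_n.
  rewrite /density card_E mulrDl mulfK ?gt_eqF ?ltr0n ?bin_gt0 ?(leq_trans m_gt1) //; lra.
have eps2_ge0 : 0 <= eps / 2 by lra.
have [X X_sub many] :=
  exists_subset_many_induced m_gt1 k_le_m (ltnW n_gt) E_graph E0_sub eps2_ge0 gap.
by exists X; split => //; rewrite mulrAC ler_pdivrMr // [X in _ <= X]mulrC.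
Qed.
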